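(* Let $TS=(S,\Sigma_b\cup\Sigma_r,S_0,R,\le)$ be a process given by a finite set $\Delta$ of labelled rules, and let $P'_0,P'_1,\dots,P'_w$ be the sequence of rule sets defined below. If a configuration $s\in S$ is reachable in $TS(P'_i)$ for some $i\in\{0,\dots,w\}$ (i.e. there is $s_0\in S_0$ with $s_0\xrightarrow{*}s$ in $TS(P'_i)$), then $s$ is reachable in the reconfigurable broadcast network $RBN(TS)$, i.e. there exist an initial configuration $\theta_0\in\Theta_0$, a configuration $\theta$ with $\theta_0\xrightarrow{*}\theta$ in $RBN(TS)$, and a vertex $v$ of $\theta$ with $L_\theta(v)=s$.
   Context: Fix a finite alphabet $\Sigma$; let $\Sigma_b=\{!!a:a\in\Sigma\}$ (broadcast labels) and $\Sigma_r=\{??a:a\in\Sigma\}$ (receive labels). A labelled well-structured transition system (labelled WSTS) is a tuple $(S,\Lambda,S_0,R,\le)$ with $S$ a set of configurations, $\Lambda$ a finite alphabet, $S_0\subseteq S$ the initial configurations, $R\subseteq S\times\Lambda\times S$, and $\le$ a well-quasi-order on $S$ compatible with $R$: if $s_1\le t_1$ and $(s_1,a,s_2)\in R$ then there is $t_2$ with $(t_1,a,t_2)\in R$ and $s_2\le t_2$. A process is a labelled WSTS with $\Lambda=\Sigma_b\cup\Sigma_r$. The process is assumed to be given by a finite description: a finite set $\Delta$ of rules, each rule $t$ carrying a label in $\Sigma_b\cup\Sigma_r$ and inducing a set of transitions of $R$ with that label ($s\xrightarrow{t}s'$ means rule $t$ is enabled at $s$ and produces $s'$), such that $R$ is the union of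 the transitions induced by the rules. For $\Delta'\subseteq\Delta$, $TS(\Delta')$ denotes the system with the same $S,S_0,\le$ but only the transitions induced by rules in $\Delta'$; it is assumed to be again a labelled WSTS. For a rule $t$, $c_t$ denotes the finite set of $\le$-minimal configurations at which $t$ is enabled. For $a\in\Sigma$, $B_a$ is the set of rules labelled $!!a$, $R_a$ the set of rules labelled $??a$, and $Rec=\bigcup_a R_a$. A configuration $c$ is coverable in a system if some reachable configuration $c'$ satisfies $c'\ge c$. Sequence $P'_i$: $P'_0=\Delta\setminus Rec$. For $i\ge1$, let $AddT_i$ be the union of the sets $R_a$ over all letters $a$ not yet handled in an earlier round such that some $t\in B_a$ has some element of $c_t$ coverable in $TS(P'_{i-1})$ (handled letters are then removed from further consideration), and $P'_i=P'_{i-1}\cup AddT_i$; $w$ is the first index with $AddT_{w+1}=\emptyset$, so $P'_w$ is the final rule set. An $S$-graph is a finite undirected graph $(V,E,L)$ without self-loops with labelling $L:V\to S$. $\Theta$ is the set of all finite $S$-graphs, $\Theta_0$ the set of all finite $S_0$-graphs (all labels in $S_0$, arbitrary topology). Broadcast step: $(V,E,L)\xrightarrow{a}(V,E,L')$ if there is $v\in V$ with $(L(v),!!a,L'(v))\in R$, $(L(u),??a,L'(u))\in R$ for every neighbour $u$ of $v$, and $L'(w)=L(w)$ for all other $w$. Reconfiguration step: $(V,E,L)\to(V,E',L)$ for any set $E'$ of edges on $V$ without self-loops. $RBN(TS)$ is the transition system on $\Theta$ with initial set $\Theta_0$ and both kinds of steps. *)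

From mathcomp Require Import all_boot.
Set Implicit Arguments. Unset Strict Implicit. Unset Printing Implicit Defensive.

(* Labels: !!a (broadcast) and ??a (receive), a in the finite alphabet Sigma. *)
Inductive label (Sigma : Type) : Type :=
| Bc : Sigma -> label Sigma
| Rc : Sigma -> label Sigma.
Arguments Bc {Sigma} a.
Arguments Rc {Sigma} a.

Definition is_recv (Sigma : Type) (l : label Sigma) : bool :=
  if l is Rc _ then true else false.

Section Process.
(* configurations, alphabet, finite rule set Delta (= the finType Rule) *)
Variables (S : Type) (Sigma : finType) (Rule : finType).
Variable le : S -> S -> Prop.
Variable S0 : S -> Prop.
Variable lab : Rule -> label Sigma.
Variable step : Rule -> S -> S -> Prop.

Definition wqo : Prop :=
  (forall x, le x x) /\ (forall x y z, le x y -> le y z -> le x z) /\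
  (forall f : nat -> S, exists i j, (i < j)%N /\ le (f i) (f j)).

Definition R_of (D : Rule -> Prop) (s : S) (l : label Sigma) (s' : S) : Prop :=
  exists t, D t /\ lab t = l /\ step t s s'.

Definition R : S -> label Sigma -> S -> Prop := R_of (fun _ => True).

Definition compatible (D : Rule -> Prop) : Prop :=
  forall s1 t1 l s2, le s1 t1 -> R_of D s1 l s2 ->
    exists t2, R_of D t1 l t2 /\ le s2 t2.

Inductive reach (D : Rule -> Prop) : S -> Prop :=
| reach_init s : S0 s -> reach D s
| reach_step s t s' : reach D s -> D t -> step t s s' -> reach D s'.

Definition coverable (D : Rule -> Prop) (c : S) : Prop :=
  exists c', reach D c' /\ le c c'.

Definition enabled (t : Rule) (s : S) : Prop := exists s', step t s s'.

(* c \in c_t : c is a le-minimal configuration at which t is enabled *)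
Definition in_ct (t : Rule) (c : S) : Prop :=
  enabled t c /\ forall c', enabled t c' -> le c' c -> le c c'.

Definition triggered (D : Rule -> Prop) (a : Sigma) : Prop :=
  exists t, lab t = Bc a /\ exists c, in_ct t c /\ coverable D c.

(* Pseq i = (P'_i, set of letters handled in rounds 1..i) *)
Fixpoint Pseq (i : nat) : (Rule -> Prop) * (Sigma -> Prop) :=
  match i with
  | 0 => (fun t => is_recv (lab t) = false, fun _ => False)
  | i'.+1 =>
      let P := (Pseq i').1 in
      let H := (Pseq i').2 in
      let newl a := ~ H a /\ triggered P a in
      (fun t => P t \/ exists a, newl a /\ lab t = Rc a,
       fun a => H a \/ newl a)
  end.

Definition P' (i : nat) : Rule -> Prop := (Pseq i).1.

(* AddT_i for i >= 1 (AddT_0 is unused; set to empty) *)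
Definition AddT (i : nat) (t : Rule) : Prop :=
  match i with
  | 0 => False
  | i'.+1 => exists a, (~ (Pseq i').2 a /\ triggered (P' i') a) /\ lab t = Rc a
  end.

(* An S-graph with vertex set 'I_n: edge relation E and labelling L.
   Since both kinds of steps keep the vertex set, a run stays on the
   same n. *)
Record sgraph (n : nat) := SGraph { E : rel 'I_n; L : 'I_n -> S }.

Definition valid_edges (n : nat) (E' : rel 'I_n) : Prop :=
  (forall u v, E' u v = E' v u) /\ (forall u, ~~ E' u u).

Definition rbn_step (n : nat) (g g' : sgraph n) : Prop :=
  (E g' = E g /\
   exists (a : Sigma) (v : 'I_n),
     R (L g v) (Bc a) (L g' v) /\
     (forall u, E g v u -> R (L g u) (Rc a) (L g' u)) /\
     (forall w, w != v -> ~~ E g v w -> L g' w = L g w))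
  \/
  (valid_edges (E g') /\ L g' = L g).

Inductive rbn_star (n : nat) : sgraph n -> sgraph n -> Prop :=
| rbn_refl g : rbn_star g g
| rbn_trans g g' g'' : rbn_step g g' -> rbn_star g' g'' -> rbn_star g g''.

Definition rbn_initial (n : nat) (g : sgraph n) : Prop :=
  valid_edges (E g) /\ forall v, S0 (L g v).

Definition rbn_reachable (s : S) : Prop :=
  exists (n : nat) (g0 g : sgraph n),
    rbn_initial g0 /\ rbn_star g0 g /\ exists v, L g v = s.

End Process.

From mathcomp Require Import all_boot.
Set Implicit Arguments. Unset Strict Implicit. Unset Printing Implicit Defensive.

(* A rule of P'_i is either a broadcast, which the
   network simulates after disconnecting the broadcasting vertex, or a
   receive ??a for a letter a triggered at a lower level j: a broadcast
   !!a is enabled at some configuration covered by a state reachable in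
   TS(P'_j), so by compatibility it is also possible from that state,
   which the induction hypothesis makes reachable in the network.  Running
   the two witnessing networks side by side and then connecting just the
   two relevant vertices lets the broadcast be received. *)

Lemma split_lshift m n (i : 'I_m) : split (lshift n i) = inl i.
Proof. exact: (unsplitK (inl i)). Qed.

Lemma split_rshift m n (i : 'I_n) : split (rshift m i) = inr i.
Proof. exact: (unsplitK (inr i)). Qed.

Section Network.
Variables (S : Type) (Sigma Rule : finType).
Variables (S0 : S -> Prop) (lab : Rule -> label Sigma).
Variable step : Rule -> S -> S -> Prop.

Local Notation rbn_step := (rbn_step lab step).
Local Notation rbn_star := (rbn_star lab step).
Local Notation rbn_reachable := (rbn_reachable S0 lab step).
Local Notation R := (R lab step).

Lemma rbn_star_trans n (g1 g2 g3 : sgraph S n) :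
  rbn_star g1 g2 -> rbn_star g2 g3 -> rbn_star g1 g3.
Proof. by elim=> // g g' g'' st _ IH /IH; apply: rbn_trans st. Qed.

Lemma rbn_star_rcons n (g1 g2 g3 : sgraph S n) :
  rbn_star g1 g2 -> rbn_step g2 g3 -> rbn_star g1 g3.
Proof.
by move=> st12 st23; apply: rbn_star_trans st12 (rbn_trans st23 (rbn_refl _ _ _)).
Qed.

Lemma rbn_star_valid n (g g' : sgraph S n) :
  valid_edges (E g) -> rbn_star g g' -> valid_edges (E g').
Proof.
move=> + st; elim: st => // g1 g2 g3 st12 _ IH V1; apply: IH.
by case: st12 => [[-> _]|[]].
Qed.

Definition sgraph_union n m (g : sgraph S n) (h : sgraph S m) : sgraph S (n + m) :=
  SGraph (fun x y => match split x, split y with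
                     | inl a, inl b => E g a b
                     | inr a, inr b => E h a b
                     | _, _ => false end)
         (fun x => match split x with inl a => L g a | inr b => L h b end).

Lemma valid_edges_union n m (g : sgraph S n) (h : sgraph S m) :
  valid_edges (E g) -> valid_edges (E h) -> valid_edges (E (sgraph_union g h)).
Proof.
move=> [symg irrg] [symh irrh]; split=> [x y|x] /=.
  by case: (split x) => a; case: (split y) => b.
by case: (split x) => a; [exact: irrg | exact: irrh].
Qed.

Lemma rbn_step_unionl n m (g g' : sgraph S n) (h : sgraph S m) :
  valid_edges (E h) -> rbn_step g g' ->
  rbn_step (sgraph_union g h) (sgraph_union g' h).
Proof.
move=> Vh [[Eg [a [v [bcv [recv others]]]]] | [Vg' Lg]]; last first.
  by right; split; [exact: valid_edges_union | rewrite /= Lg].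
left; split; first by rewrite /= Eg.
exists a, (lshift m v); rewrite /= split_lshift; split=> //.
split=> x; case: (split_ordP x) => b xE; rewrite ?xE ?split_lshift ?split_rshift //.
- exact: recv.
- by rewrite eq_shift; exact: others.
Qed.

Lemma rbn_step_unionr n m (g : sgraph S n) (h h' : sgraph S m) :
  valid_edges (E g) -> rbn_step h h' ->
  rbn_step (sgraph_union g h) (sgraph_union g h').
Proof.
move=> Vg [[Eh [a [v [bcv [recv others]]]]] | [Vh' Lh]]; last first.
  by right; split; [exact: valid_edges_union | rewrite /= Lh].
left; split; first by rewrite /= Eh.
exists a, (rshift n v); rewrite /= split_rshift; split=> //.
split=> x; case: (split_ordP x) => b xE; rewrite ?xE ?split_lshift ?split_rshift //.
- exact: recv.
- by rewrite eq_shift; exact: others.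
Qed.

Lemma rbn_star_union n m (g0 g : sgraph S n) (h0 h : sgraph S m) :
  valid_edges (E g0) -> valid_edges (E h0) ->
  rbn_star g0 g -> rbn_star h0 h ->
  rbn_star (sgraph_union g0 h0) (sgraph_union g h).
Proof.
move=> Vg0 Vh0 stg sth.
apply: (@rbn_star_trans _ _ (sgraph_union g h0)).
  elim: stg {Vg0} => [g1|g1 g2 g3 st _ IH]; first exact: rbn_refl.
  by apply: rbn_trans IH; exact: rbn_step_unionl.
have {Vg0 stg} Vg := rbn_star_valid Vg0 stg.
elim: sth {Vh0} => [h1|h1 h2 h3 st _ IH]; first exact: rbn_refl.
by apply: rbn_trans IH; exact: rbn_step_unionr.
Qed.

Lemma rbn_reachable_initial s : S0 s -> rbn_reachable s.
Proof.
move=> S0s; pose g := SGraph (fun _ _ : 'I_1 => false) (fun _ => s).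
by exists 1, g, g; do !split => //; [exact: rbn_refl | exists ord0].
Qed.

Lemma rbn_reachable_broadcast s s' a :
  rbn_reachable s -> R s (Bc a) s' -> rbn_reachable s'.
Proof.
move=> [n [g0 [g [init [run [v Lv]]]]]] bc.
pose e := fun _ _ : 'I_n => false.
exists n, g0, (SGraph e (fun x => if x == v then s' else L g x)).
do 2!split=> //; last by exists v; rewrite /= eqxx.
apply: rbn_star_rcons (rbn_star_rcons (g3 := SGraph e (L g)) run _) _.
  by right.
left; split=> //; exists a, v; rewrite /= eqxx Lv.
by split=> //; split=> [//|w /negbTE ->].
Qed.

Lemma rbn_reachable_receive s s' c d a :
  rbn_reachable s -> rbn_reachable c ->
  R c (Bc a) d -> R s (Rc a) s' -> rbn_reachable s'.
Proof.
move=> [n [g0 [g [[Vg0 S0g] [rung [v Lv]]]]]].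
move=> [m [h0 [h [[Vh0 S0h] [runh [u Lu]]]]]] bc rc.
pose p := lshift m v; pose q := rshift n u.
have qp : (q == p) = false by rewrite eq_shift.
pose e x y := ((x == p) && (y == q)) || ((x == q) && (y == p)).
have Ve : valid_edges e.
  split=> [x y|x]; first by rewrite /e orbC; congr orb; apply: andbC.
  by rewrite /e andbC orbb; case: (x =P q) => // ->; rewrite qp.
pose gh := sgraph_union g h.
exists (n + m), (sgraph_union g0 h0),
  (SGraph e (fun x => if x == q then d else if x == p then s' else L gh x)).
split.
  split=> [|x]; first exact: valid_edges_union.
  by case: (split_ordP x) => b ->; rewrite /= ?split_lshift ?split_rshift.
split; last by exists p; rewrite /= eq_sym qp eqxx.
apply: rbn_star_rcons (rbn_star_rcons (g2 := gh) (g3 := SGraph e (L gh)) _ _) _.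
- exact: rbn_star_union.
- by right.
left; split=> //; exists a, q; rewrite /= eqxx split_rshift Lu.
split=> //; split=> [x|x xq]; rewrite /e qp eqxx /=.
  by move=> /eqP ->; rewrite eq_sym qp eqxx split_lshift Lv.
by move=> xp; rewrite (negbTE xq) (negbTE xp).
Qed.

End Network.

Section Levels.
Variables (S : Type) (Sigma Rule : finType).
Variables (le : S -> S -> Prop) (S0 : S -> Prop) (lab : Rule -> label Sigma).
Variable step : Rule -> S -> S -> Prop.

Local Notation P' := (P' le S0 lab step).
Local Notation triggered := (triggered le S0 lab step).
Local Notation rbn_reachable := (rbn_reachable S0 lab step).

Lemma P'_rule_cases i t : P' i t ->
  is_recv (lab t) = false \/
  exists a j, (j < i)%N /\ lab t = Rc a /\ triggered (P' j) a.
Proof.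
elim: i => [|i IH]; first by left.
case=> [/IH [|[a [j [lt_ji lab_trig]]]]|[a [[_ trig] lab_t]]]; first by left.
  by right; exists a, j; rewrite ltnW.
by right; exists a, i.
Qed.

Lemma triggered_broadcast (D : Rule -> Prop) a :
  compatible le lab step (fun _ => True) -> triggered D a ->
  (forall s, reach S0 step D s -> rbn_reachable s) ->
  exists c d, rbn_reachable c /\ R lab step c (Bc a) d.
Proof.
move=> compat [t [lab_t [c [[[c1 step_c] _] [c' [reach_c' le_cc']]]]]] sim.
have [|d [bc _]] := compat c c' (Bc a) c1 le_cc'; first by exists t.
by exists c', d; split; first exact: sim.
Qed.

Lemma reach_P'_rbn_reachable i s :
  compatible le lab step (fun _ => True) ->
  reach S0 step (P' i) s -> rbn_reachable s.
Proof.
move=> compat; elim/ltn_ind: i s => i IHi s.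
elim=> [s0 S0s|s1 t s' _ reach_s1 P't step_t]; first exact: rbn_reachable_initial.
have [|[a [j [lt_ji [lab_t trig]]]]] := P'_rule_cases P't.
  case lab_t: (lab t) => [a|//] _.
  by apply: (rbn_reachable_broadcast (a := a) reach_s1); exists t.
have [c [d [reach_c bc]]] := triggered_broadcast compat trig (IHi j lt_ji).
by apply: rbn_reachable_receive reach_s1 reach_c bc _; exists t.
Qed.

End Levels.

Theorem lemma10 (S : Type) (Sigma : finType) (Rule : finType)
  (le : S -> S -> Prop) (S0 : S -> Prop) (lab : Rule -> label Sigma)
  (step : Rule -> S -> S -> Prop)
  (Hwqo : wqo le)
  (Hcompat : forall D : Rule -> Prop, compatible le lab step D)
  (w : nat)
  (Hw_empty : forall t, ~ AddT le S0 lab step w.+1 t)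
  (Hw_first : forall j, (1 <= j <= w)%N -> exists t, AddT le S0 lab step j t)
  (i : nat) (Hi : (i <= w)%N) (s : S)
  (Hreach : reach S0 step (P' le S0 lab step i) s) :
  rbn_reachable S0 lab step s.
Proof. exact: reach_P'_rbn_reachable (Hcompat _) Hreach. Qed.
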